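(* Consider the contextual bandit problem with finite policy class $\Theta$ and $K$ actions. For any sequence $(x_1,\boldsymbol{c}_1),\ldots,(x_T,\boldsymbol{c}_T)$, EXP4 with its learning rate $\eta'$ tuned appropriately as a function of $T,K,|\Theta|$ and the given range bound $\rho_T$ is $\big(\tfrac12,\mathcal{O}(\sqrt{KT\ln|\Theta|})\big)$-weakly-stable.
   Context: Contextual bandits: on each round $t=1,\ldots,T$ a context $x_t$ is revealed, the learner picks a policy $\theta_t\in\Theta$, each policy being a map $\theta:\mathcal{X}\to[K]$, and the loss is $f_t(\theta,x)=c_{t,\theta(x)}$ for $\boldsymbol{c}_t\in[0,1]^K$; the learner observes only $f_t(\theta_t,x_t)$. Regret w.r.t. $\Theta$: $\sup_{\theta\in\Theta}\mathbb{E}[\sum_t f_t(\theta_t,x_t)-f_t(\theta,x_t)]$. Induced environment: given the environment $\mathcal{E}$ producing the fixed sequence, an environment $\mathcal{E}'$ induced by importance weighting acts on each round $t$: picks an arbitrary $p_t\in[0,1]$ (possibly history dependent), reveals $x_t$, the learner picks $\theta_t$, and with probability $p_t$ the loss function becomes $f'_t=f_t/p_t$, otherwise $f'_t\equiv0$; the learner observes $f'_t(\theta_t,x_t)$. Weak stability: for $\alpha\in(0,1]$ and non-decreasing $\mathcal{R}$, an algorithm that receives a number $\rho_T$ ahead of time is $(\alpha,\mathcal{R})$-weakly-stable with respect to $\mathcal{E}$ if its regret under $\mathcal{E}$ is $\mathcal{R}(T)$ and under every induced $\mathcal{E}'$ with $\rho_T\ge\max_t1/p_t$, $\sup_{\theta\in\Theta}\mathbb{E}[\sum_t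 f'_t(\theta_t,x_t)-f'_t(\theta,x_t)]\le\rho_T^\alpha\mathcal{R}(T)$. EXP4 with learning rate $\eta'>0$: weights $w_1$ uniform on $\Theta$; on round $t$ sample $\theta_t\sim w_t$, let $q_t(a)=\sum_{\theta:\theta(x_t)=a}w_t(\theta)$, observe loss $\ell_t$, set $\hat c_t(a)=\ell_t\mathbf{1}\{\theta_t(x_t)=a\}/q_t(a)$ for $a\in[K]$, and update $w_{t+1}(\theta)\propto w_t(\theta)\exp(-\eta'\hat c_t(\theta(x_t)))$. *)

From HB Require Import structures.
From mathcomp Require Import all_boot all_order all_algebra.
From mathcomp Require Import all_classical all_reals.
From mathcomp Require Import all_analysis.
Set Implicit Arguments. Unset Strict Implicit. Unset Printing Implicit Defensive.
Import Order.TTheory GRing.Theory Num.Theory.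
Local Open Scope ring_scope.

(* Rounds are indexed 0,...,T-1.  A history is the list of
   (chosen policy, coin outcome) pairs of past rounds, MOST RECENT FIRST;
   the round index of the current round is [size h].  The coin outcome
   [true] means "with probability p_t the loss becomes f_t/p_t". *)

Section Exp4.
Variables (R : realType) (X : Type) (Theta : finType) (K : nat).
Variable pol : Theta -> X -> 'I_K.
Variable x : nat -> X.
Variable c : nat -> 'I_K -> R.
Variable p : seq (Theta * bool) -> R.
Variable eta : R.

Definition obs_loss (h : seq (Theta * bool)) (th : Theta) (b : bool) : R :=
  if b then c (size h) (pol th (x (size h))) / p h else 0.

Definition qprob (w : Theta -> R) (s : nat) (a : 'I_K) : R :=
  (\sum_(th : Theta | pol th (x s) == a) w th) / (\sum_(th : Theta) w th).

Fixpoint exp4w (h : seq (Theta * bool)) : Theta -> R :=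
  match h with
  | [::] => fun _ => 1
  | (tht, b) :: h' =>
      let w := exp4w h' in
      let s := size h' in
      let a := pol tht (x s) in
      let l := obs_loss h' tht b in
      let chat : 'I_K -> R :=
        fun a' => if a' == a then l / qprob w s a else 0 in
      fun th => w th * expR (- (eta * chat (pol th (x s))))
  end.

Definition exp4dist (h : seq (Theta * bool)) (th : Theta) : R :=
  exp4w h th / \sum_(th' : Theta) exp4w h th'.

(* expected remaining regret against the comparator [ths], over n more
   rounds, starting from history h:
   E[ sum_t f'_t(theta_t,x_t) - f'_t(ths,x_t) ] *)
Fixpoint exp_regret (ths : Theta) (n : nat) (h : seq (Theta * bool)) : R :=
  match n with
  | 0 => 0
  | n'.+1 =>
      let s := size h in
      \sum_(th : Theta) exp4dist h th *
        (p h * ((c s (pol th (x s)) - c s (pol ths (x s))) / p h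
                + exp_regret ths n' ((th, true) :: h))
         + (1 - p h) * exp_regret ths n' ((th, false) :: h))
  end.

Definition exp4_regret (T : nat) (ths : Theta) : R := exp_regret ths T [::].

End Exp4.

From HB Require Import structures.
From mathcomp Require Import all_boot all_order all_algebra.
From mathcomp Require Import all_classical all_reals.
From mathcomp Require Import all_analysis.
From mathcomp Require Import ring lra.
Import Order.TTheory GRing.Theory Num.Theory.
Local Open Scope ring_scope.

(* EXP4 is exponential weights run on the importance-weighted estimates
   [loss_est].  The potential [eta^-1 ln (sum_th w_t th / w_t ths)] is
   nonnegative and starts at [ln |Theta| / eta].  An unobserved round leaves it
   unchanged; on an observed round, [ln E[exp(-eta X)] <= -eta E X + eta^2 E X^2]
   decreases it by the estimated instantaneous regret up to [eta] times the
   second moment of the estimate.  Multiplied by the observation probability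
   [p_t], the estimate is unbiased both for the learner's and for the
   comparator's loss, and its second moment is at most [rho / q_t(a)], whose
   average under [w_t] is at most [K rho].  So the regret is at most
   [ln |Theta| / eta + eta K rho T], and [eta = sqrt (ln |Theta| / (K T rho))]
   balances the two terms into [2 sqrt rho sqrt (K T ln |Theta|)]. *)

Section ExponentialWeights.
Context {R : realType} {I : finType}.

Lemma expRN_le_quadratic {y : R} : 0 <= y -> expR (- y) <= 1 - y + y ^+ 2.
Proof.
move=> y_ge0; rewrite expRN.
have inv_le : (expR y)^-1 <= (1 + y)^-1.
  by rewrite lef_pV2 ?posrE ?expR_gt0 ?expR_ge1Dx //; lra.
apply: (le_trans inv_le); rewrite -[X in X <= _]mul1r ler_pdivrMr; last by lra.
have : 0 <= y ^+ 3 by rewrite exprn_ge0.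
rewrite !exprS expr0; nra.
Qed.

Lemma sumr_gt0 (i0 : I) {F : I -> R} : (forall i, 0 < F i) -> 0 < \sum_i F i.
Proof.
by move=> F_gt0; rewrite (bigD1 i0) //= ltr_pwDl ?sumr_ge0 // => i _; rewrite ltW.
Qed.

Lemma ln_mean_expRN_le (pi g : I -> R) (eta : R) :
  0 <= eta -> (forall i, 0 <= pi i) -> \sum_i pi i = 1 -> (forall i, 0 <= g i) ->
  ln (\sum_i pi i * expR (- (eta * g i)))
    <= - eta * (\sum_i pi i * g i) + eta ^+ 2 * \sum_i pi i * g i ^+ 2.
Proof.
move=> eta_ge0 pi_ge0 sum_pi g_ge0.
set E := \sum_i _.
have E_gt0 : 0 < E.
  have E_ge0 : 0 <= E by apply: sumr_ge0 => i _; rewrite mulr_ge0 ?expR_ge0.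
  rewrite lt_def E_ge0 andbT psumr_neq0; last by move=> i _; rewrite mulr_ge0 ?expR_ge0.
  have : \sum_i pi i != 0 by rewrite sum_pi oner_neq0.
  rewrite psumr_neq0 // => /hasP[i _ /andP[_ pi_gt0]].
  by apply/hasP; exists i; rewrite ?mem_index_enum //= mulr_gt0 ?expR_gt0.
have lnE_le : ln E <= E - 1.
  have := @le_ln1Dx R (E - 1); rewrite addrCA subrr addr0; apply.
  by rewrite -subr_gt0 opprK subrK.
apply: (le_trans lnE_le).
rewrite -sum_pi -sumrB !mulr_sumr -big_split /=; apply: ler_sum => i _.
have := expRN_le_quadratic (mulr_ge0 eta_ge0 (g_ge0 i)).
have := pi_ge0 i; nra.
Qed.

Definition potential (eta : R) (w : I -> R) (i0 : I) : R :=
  ln ((\sum_i w i) / w i0) / eta.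

Lemma potential_ge0 (eta : R) (w : I -> R) (i0 : I) :
  0 <= eta -> (forall i, 0 < w i) -> 0 <= potential eta w i0.
Proof.
move=> eta_ge0 w_gt0; rewrite divr_ge0 // ln_ge0 // ler_pdivlMr // mul1r.
by rewrite (bigD1 i0) //= lerDl sumr_ge0 // => i _; rewrite ltW.
Qed.

Lemma potential_uniform (eta : R) (i0 : I) : potential eta (fun=> 1) i0 = ln (#|I|%:R) / eta.
Proof. by rewrite /potential sumr_const divr1. Qed.

Lemma potential_expR_update (eta : R) (w g : I -> R) (i0 : I) :
  0 < eta -> (forall i, 0 < w i) -> (forall i, 0 <= g i) ->
  potential eta (fun i => w i * expR (- (eta * g i))) i0
    <= potential eta w i0 - \sum_i (w i / \sum_j w j) * g i + g i0
       + eta * \sum_i (w i / \sum_j w j) * g i ^+ 2.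
Proof.
move=> eta_gt0 w_gt0 g_ge0; rewrite /potential.
set S := \sum_j w j; set pi := fun i => w i / S.
have S_gt0 : 0 < S := sumr_gt0 i0 w_gt0.
have pi_gt0 i : 0 < pi i by rewrite divr_gt0.
have pi_ge0 i : 0 <= pi i by rewrite ltW.
have sum_pi : \sum_i pi i = 1 by rewrite -mulr_suml divff // gt_eqF.
have lnE_le := @ln_mean_expRN_le pi g eta (ltW eta_gt0) pi_ge0 sum_pi g_ge0.
set E := \sum_i pi i * _ in lnE_le.
have E_gt0 : 0 < E.
  by apply: (sumr_gt0 i0) => i; rewrite mulr_gt0 ?expR_gt0.
have -> : (\sum_i w i * expR (- (eta * g i))) / (w i0 * expR (- (eta * g i0)))
          = (S / w i0) * (E * expR (eta * g i0)).
  have -> : \sum_i w i * expR (- (eta * g i)) = S * E.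
    by rewrite /E mulr_sumr; apply: eq_bigr => i _; rewrite /pi; field; rewrite gt_eqF.
  by rewrite expRN; field; rewrite !gt_eqF ?expR_gt0.
rewrite lnM ?posrE ?divr_gt0 ?mulr_gt0 ?expR_gt0 //.
rewrite [ln (E * _)]lnM ?posrE ?expR_gt0 // expRK.
set A := \sum_i pi i * g i in lnE_le; set B := \sum_i pi i * g i ^+ 2 in lnE_le.
have -> : ln (S / w i0) / eta - A + g i0 + eta * B
          = (ln (S / w i0) + ((- eta * A + eta ^+ 2 * B) + eta * g i0)) / eta.
  by field; rewrite gt_eqF.
by rewrite ler_pM2r ?invr_gt0 // lerD2l lerD2r.
Qed.
End ExponentialWeights.

Section Exp4Regret.
Context {R : realType} {X : Type} {Theta : finType} {K : nat}.
Context {pol : Theta -> X -> 'I_K} {x : nat -> X} {c : nat -> 'I_K -> R}.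
Context {p : seq (Theta * bool) -> R} {eta : R}.

Local Notation W := (exp4w pol x c p eta).
Local Notation d := (exp4dist pol x c p eta).
Local Notation act h th := (pol th (x (size h))).
Local Notation q h := (qprob pol x (W h) (size h)).

Lemma exp4w_gt0 h th : 0 < W h th.
Proof. by elim: h th => [|[th' b] h IH] th /=; rewrite ?mulr_gt0 ?expR_gt0. Qed.

Lemma exp4dist_gt0 h th : 0 < d h th.
Proof. by rewrite divr_gt0 ?exp4w_gt0 // (sumr_gt0 th) // => ?; apply: exp4w_gt0. Qed.

Lemma qprob_exp4dist h s a : qprob pol x (W h) s a = \sum_(th | pol th (x s) == a) d h th.
Proof. by rewrite /qprob mulr_suml. Qed.

Lemma qprob_gt0 h th : 0 < q h (act h th).
Proof.
rewrite qprob_exp4dist (bigD1 th) //= ltr_pwDl ?exp4dist_gt0 ?sumr_ge0 // => ? _.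
exact/ltW/exp4dist_gt0.
Qed.

Lemma sum_exp4dist h (th0 : Theta) : \sum_th d h th = 1.
Proof.
by rewrite -mulr_suml divff // gt_eqF // (sumr_gt0 th0) // => ?; apply: exp4w_gt0.
Qed.

Lemma sum_exp4dist_if h s a v :
  \sum_th d h th * (if pol th (x s) == a then v else 0) = qprob pol x (W h) s a * v.
Proof.
rewrite qprob_exp4dist mulr_suml [RHS]big_mkcond; apply: eq_bigr => th _.
by case: ifP; rewrite ?mulr0 ?mul0r.
Qed.

Lemma sum_exp4dist_div_qprob h s :
  \sum_th d h th / qprob pol x (W h) s (pol th (x s)) <= K%:R.
Proof.
rewrite (partition_big (fun th => pol th (x s)) predT) //=.
apply: (le_trans (y := \sum_(a : 'I_K) 1)); last by rewrite sumr_const card_ord.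
apply: ler_sum => a _.
rewrite (eq_bigr (fun th => d h th / qprob pol x (W h) s a)) => [|th /eqP -> //].
rewrite -mulr_suml -qprob_exp4dist.
by have [->|q_neq0] := eqVneq (qprob pol x (W h) s a) 0; rewrite ?mul0r ?divff.
Qed.

(* The estimate [c_hat_t(pol t x_t)] after playing [th] and observing its loss;
   [exp4w] multiplies the weight of [t] by [expR (- (eta * loss_est h th t))]. *)
Definition loss_est h th t : R :=
  if act h t == act h th then obs_loss pol x c p h th true / q h (act h th) else 0.

Context {rho : R} {ths : Theta}.
Hypotheses (eta_gt0 : 0 < eta) (c_in01 : forall t a, 0 <= c t a <= 1)
  (p_range : forall h, 0 < p h <= 1 /\ (p h)^-1 <= rho).

Local Notation Psi h := (potential eta (W h) ths).

Lemma p_gt0 h : 0 < p h.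
Proof. by case: (p_range h) => /andP[]. Qed.

Lemma rho_ge1 : 1 <= rho.
Proof.
have [/andP[p0 p_le1] inv_p_le] := p_range [::].
by apply: le_trans inv_p_le; rewrite invf_ge1.
Qed.

Lemma loss_est_ge0 h th t : 0 <= loss_est h th t.
Proof.
rewrite /loss_est /obs_loss; case: ifP => // _.
have /andP[c_ge0 _] := c_in01 (size h) (act h th).
exact: divr_ge0 (divr_ge0 c_ge0 (ltW (p_gt0 h))) (ltW (qprob_gt0 h th)).
Qed.

Lemma exp4w_unobserved h th : W ((th, false) :: h) =1 W h.
Proof. by move=> t /=; rewrite /obs_loss !mul0r if_same mulr0 oppr0 expR0 mulr1. Qed.

Lemma potential_exp4w_unobserved h th : Psi ((th, false) :: h) = Psi h.
Proof.
by rewrite /potential (eq_bigr _ (fun t _ => exp4w_unobserved h th t)) exp4w_unobserved.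
Qed.

Lemma potential_exp4w_observed h th :
  Psi ((th, true) :: h) <= Psi h - \sum_t d h t * loss_est h th t + loss_est h th ths
                           + eta * \sum_t d h t * loss_est h th t ^+ 2.
Proof. exact: potential_expR_update eta_gt0 (exp4w_gt0 h) (loss_est_ge0 h th). Qed.

Lemma loss_est_mean h th : p h * \sum_t d h t * loss_est h th t = c (size h) (act h th).
Proof.
rewrite sum_exp4dist_if /obs_loss.
by field; rewrite !gt_eqF ?p_gt0 ?qprob_gt0.
Qed.

Lemma loss_est_mean_comparator h :
  p h * \sum_th d h th * loss_est h th ths = c (size h) (act h ths).
Proof.
rewrite -[RHS](loss_est_mean h ths); congr (_ * _); apply: eq_bigr => th _.
by rewrite /loss_est /obs_loss eq_sym; case: eqP => [->|].
Qed.

Lemma loss_est_second_moment h th :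
  p h * \sum_t d h t * loss_est h th t ^+ 2 <= rho / q h (act h th).
Proof.
have /andP[c_ge0 c_le1] := c_in01 (size h) (act h th).
have [_ inv_p_le] := p_range h.
have p0 := p_gt0 h; have q0 := qprob_gt0 h th.
have -> : p h * \sum_t d h t * loss_est h th t ^+ 2
          = c (size h) (act h th) ^+ 2 * ((p h)^-1 / q h (act h th)).
  rewrite (eq_bigr (fun t => d h t * (if act h t == act h th then
             (obs_loss pol x c p h th true / q h (act h th)) ^+ 2 else 0))); last first.
    by move=> t _; rewrite /loss_est; case: ifP; rewrite ?expr0n.
  by rewrite sum_exp4dist_if /obs_loss; field; rewrite !gt_eqF.
set Q := q h (act h th) in q0 *.
apply: (le_trans (y := (p h)^-1 / Q)).
  by rewrite ler_piMl ?expr_le1 // divr_ge0 ?invr_ge0 ?(ltW p0) ?(ltW q0).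
by rewrite ler_pM2r ?invr_gt0.
Qed.

Local Notation regret := (exp_regret pol x c p eta ths).

Lemma exp_regret_round_le {n} h th {r : R} :
  (forall h', regret n h' <= Psi h' + r) ->
  p h * ((c (size h) (act h th) - c (size h) (act h ths)) / p h + regret n ((th, true) :: h))
    + (1 - p h) * regret n ((th, false) :: h)
  <= Psi h + r + (p h * loss_est h th ths - c (size h) (act h ths))
     + eta * (rho / q h (act h th)).
Proof.
move=> regret_le.
have [/andP[p0 p_le1] _] := p_range h.
have mean := loss_est_mean h th; have moment := loss_est_second_moment h th.
set M := \sum_t _ in mean; set V := \sum_t _ in moment.
set e := loss_est h th ths; set Q := q h (act h th) in moment *.
have observed : regret n ((th, true) :: h) <= Psi h - M + e + eta * V + r.
  by apply: le_trans (regret_le _) _; rewrite lerD2r potential_exp4w_observed.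
have unobserved : regret n ((th, false) :: h) <= Psi h + r.
  by rewrite -(potential_exp4w_unobserved h th) regret_le.
have observed_p := ler_wpM2l (ltW p0) observed.
have unobserved_p : (1 - p h) * regret n ((th, false) :: h) <= (1 - p h) * (Psi h + r).
  by rewrite ler_wpM2l // subr_ge0.
have eta_moment : eta * (p h * V) <= eta * (rho / Q) by rewrite ler_wpM2l // ltW.
rewrite mulrDr mulrCA divff ?mulr1 ?gt_eqF //.
move: observed_p unobserved_p eta_moment; rewrite -mean; lra.
Qed.

Lemma exp_regret_le n h : regret n h <= Psi h + n%:R * (eta * (K%:R * rho)).
Proof.
elim: n h => [|n IH] h /=.
  by rewrite mul0r addr0 potential_ge0 ?(ltW eta_gt0) // => th; apply: exp4w_gt0.
apply: le_trans (ler_sum _ (fun th _ =>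
  ler_wpM2l (ltW (exp4dist_gt0 h th)) (exp_regret_round_le h th IH))) _.
set B := eta * (K%:R * rho); set C := c (size h) (act h ths).
rewrite (eq_bigr (fun th => (Psi h + n%:R * B) * d h th
    + (p h * (d h th * loss_est h th ths) - C * d h th)
    + eta * rho * (d h th / q h (act h th)))); last by move=> th _; ring.
rewrite !big_split /= sumrN -!mulr_sumr (sum_exp4dist _ ths) !mulr1.
rewrite loss_est_mean_comparator subrr addr0 mulrSr mulrDl mul1r addrA lerD2l.
have eta_rho_ge0 : 0 <= eta * rho by rewrite mulr_ge0 ?(ltW eta_gt0) // (le_trans ler01 rho_ge1).
have -> : B = eta * rho * K%:R by rewrite /B; ring.
by rewrite ler_wpM2l // sum_exp4dist_div_qprob.
Qed.

Lemma exp4_regret_le T :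
  exp4_regret pol x c p eta T ths <= ln #|Theta|%:R / eta + T%:R * (eta * (K%:R * rho)).
Proof. by rewrite -(potential_uniform eta ths); apply: exp_regret_le. Qed.

End Exp4Regret.

Lemma exp_regret_single_policy {R : realType} {X : Type} {Theta : finType} {K : nat}
    (pol : Theta -> X -> 'I_K) x (c : nat -> 'I_K -> R) p eta ths n h :
  (#|Theta| <= 1)%N -> exp_regret pol x c p eta ths n h = 0.
Proof.
move=> /fintype_le1P single; elim: n h => // n IH h /=; apply: big1 => th _.
by rewrite !IH (single th ths) subrr mul0r; ring.
Qed.

Definition exp4_learning_rate {R : realType} (T K N : nat) (rho : R) : R :=
  if (0 < ln (N%:R : R)) && (0 < K%:R * T%:R * rho)
  then Num.sqrt (ln (N%:R : R) / (K%:R * T%:R * rho)) else 1.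

Lemma exp4_learning_rate_gt0 {R : realType} T K N (rho : R) :
  0 < exp4_learning_rate T K N rho.
Proof. by rewrite /exp4_learning_rate; case: ifP => [/andP[? ?]|_]; rewrite ?sqrtr_gt0 ?divr_gt0. Qed.

Lemma sqrt_ratio_balance {R : realType} (L M : R) : 0 < L -> 0 < M ->
  L / Num.sqrt (L / M) + Num.sqrt (L / M) * M = 2 * Num.sqrt (L * M).
Proof.
move=> L_gt0 M_gt0.
rewrite !sqrtrM ?(ltW L_gt0) // sqrtrV ?(ltW M_gt0) //.
rewrite -{1}(sqr_sqrtr (ltW L_gt0)) -{3}(sqr_sqrtr (ltW M_gt0)).
have := sqrtr_gt0 L; have := sqrtr_gt0 M; rewrite L_gt0 M_gt0.
by move=> sqrtM_gt0 sqrtL_gt0; field; rewrite !gt_eqF.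
Qed.

Theorem lemma6 :
  forall R : realType,
  exists C : R, 0 <= C /\
  exists tune : nat -> nat -> nat -> R -> R,
    (forall T K N rho, 0 < tune T K N rho) /\
    forall (X : Type) (Theta : finType) (K T : nat)
           (pol : Theta -> X -> 'I_K) (x : nat -> X) (c : nat -> 'I_K -> R),
      injective pol ->
      (0 < #|Theta|)%N ->
      (forall t a, 0 <= c t a <= 1) ->
      forall (rho : R) (p : seq (Theta * bool) -> R),
        (forall h, 0 < p h <= 1 /\ (p h)^-1 <= rho) ->
        forall ths : Theta,
          exp4_regret pol x c p (tune T K #|Theta| rho) T ths
          <= Num.sqrt rho *
             (C * Num.sqrt (K%:R * T%:R * ln (#|Theta|%:R : R))).
Proof.
move=> R; exists 2; split=> //; exists exp4_learning_rate.
split=> [T K N rho|]; first exact: exp4_learning_rate_gt0.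
move=> X Theta K T pol x c _ _ c_in01 rho p p_range ths.
have rho_ge1 := rho_ge1 p_range.
have [card_le1|card_gt1] := leqP #|Theta| 1.
  by rewrite /exp4_regret exp_regret_single_policy.
case: T => [|T]; first by rewrite /exp4_regret /= !(mulr0, mul0r, sqrtr0).
case: K pol c c_in01 => [|K] pol c c_in01; first by case: (pol ths (x 0%N)).
set L := ln (#|Theta|%:R : R); set M := K.+1%:R * T.+1%:R * rho.
have L_gt0 : 0 < L by rewrite ln_gt0 // ltr1n.
have M_gt0 : 0 < M by rewrite !mulr_gt0 // (lt_le_trans ltr01 rho_ge1).
have eta_gt0 := exp4_learning_rate_gt0 T.+1 K.+1 #|Theta| rho.
apply: le_trans (exp4_regret_le eta_gt0 c_in01 p_range T.+1) _.
rewrite /exp4_learning_rate -/L -/M L_gt0 M_gt0 /=.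
have -> : T.+1%:R * (Num.sqrt (L / M) * (K.+1%:R * rho)) = Num.sqrt (L / M) * M.
  by rewrite /M; ring.
rewrite sqrt_ratio_balance // [leRHS]mulrCA -sqrtrM ?(le_trans ler01 rho_ge1) //.
by rewrite (_ : rho * _ = L * M) // /M; ring.
Qed.
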